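(* Let $(H,m,u,\Delta,\varepsilon,\omega,s,\alpha,\beta)$ be a dual quasi-Hopf algebra over a field $\Bbbk$. Then $S:=\beta\ast s\ast\alpha$, i.e. $S(h)=\beta(h_1)s(h_2)\alpha(h_3)$, is a preantipode for $H$.
   Context: A dual quasi-bialgebra is a datum $(H,m,u,\Delta,\varepsilon,\omega)$ where $(H,\Delta,\varepsilon)$ is a coassociative counital coalgebra over $\Bbbk$; $m:H\otimes H\to H$, $hk:=m(h\otimes k)$, and $u:\Bbbk\to H$, $1_H:=u(1)$, are coalgebra maps with $1_Hh=h=h1_H$; and $\omega:H\otimes H\otimes H\to\Bbbk$ is convolution invertible with inverse $\omega^{-1}$, satisfies $\omega(h\otimes k\otimes l)=\varepsilon(h)\varepsilon(k)\varepsilon(l)$ whenever $1_H\in\{h,k,l\}$, the 3-cocycle condition $\omega(h_1\otimes k_1\otimes l_1m_1)\omega(h_2k_2\otimes l_2\otimes m_2)=\omega(k_1\otimes l_1\otimes m_1)\omega(h_1\otimes k_2l_2\otimes m_2)\omega(h_2\otimes k_3\otimes l_3)$, and quasi-associativity $h_1(k_1l_1)\omega(h_2\otimes k_2\otimes l_2)=\omega(h_1\otimes k_1\otimes l_1)(h_2k_2)l_2$ (Sweedler notation $\Delta(h)=h_1\otimes h_2$). A dual quasi-Hopf algebra $(H,m,u,\Delta,\varepsilon,\omega,s,\alpha,\beta)$ is a dual quasi-bialgebra with a coalgebra anti-morphism $s:H\to H$ and $\alpha,\beta\in H^*$ such that for all $h\in H$: $h_1\beta(h_2)s(h_3)=\beta(h)1_H$;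 $s(h_1)\alpha(h_2)h_3=\alpha(h)1_H$; $\omega(h_1\otimes\beta(h_2)s(h_3)\alpha(h_4)\otimes h_5)=\varepsilon(h)=\omega^{-1}(s(h_1)\otimes\alpha(h_2)h_3\beta(h_4)\otimes s(h_5))$. A preantipode for a dual quasi-bialgebra $H$ is a $\Bbbk$-linear map $S:H\to H$ such that for all $x\in H$: $S(x_2)_1\otimes x_1S(x_2)_2=S(x)\otimes 1_H$; $\omega(x_1\otimes S(x_2)\otimes x_3)=\varepsilon(x)$; $S(x_1)_1x_2\otimes S(x_1)_2=1_H\otimes S(x)$. *)

From HB Require Import structures.
From mathcomp Require Import all_boot all_order all_algebra.
Set Implicit Arguments. Unset Strict Implicit. Unset Printing Implicit Defensive.
Import GRing.Theory.
Local Open Scope ring_scope.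

(* Encoding conventions:
   - the vector space H over the field K is an [lmodType K];
   - an element of H (x) H is represented by a finite list of pairs
     [(x_i, y_i)] standing for sum_i x_i (x) y_i, and two such lists are
     equal as tensors ([teq2]) iff every bilinear map into every K-vector
     space takes the same value on them (universal property of (x));
     similarly for H (x) H (x) H ([teq3]);
   - the comultiplication is a map [Delta : H -> seq (H * H)] giving a
     Sweedler representation of Delta(h); [sw Delta n h] is the list of
     Sweedler (n+1)-tuples of the iterated coproduct, and the i-th leg is
     [t`_i]. *)

Section DQH.
Variables (K : fieldType) (H : lmodType K).

Definition lin1 (W : lmodType K) (f : H -> W) : Prop :=
  forall (a : K) (x y : H), f (a *: x + y) = a *: f x + f y.

Definition linf (f : H -> K) : Prop :=
  forall (a : K) (x y : H), f (a *: x + y) = a * f x + f y.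

Definition bilin (W : lmodType K) (f : H -> H -> W) : Prop :=
  (forall y, lin1 (fun x => f x y)) /\ (forall x, lin1 (f x)).

Definition trilin (W : lmodType K) (f : H -> H -> H -> W) : Prop :=
  [/\ (forall y z, lin1 (fun x => f x y z)),
      (forall x z, lin1 (fun y => f x y z)) &
      (forall x y, lin1 (f x y))].

Definition trilinf (f : H -> H -> H -> K) : Prop :=
  [/\ (forall y z, linf (fun x => f x y z)),
      (forall x z, linf (fun y => f x y z)) &
      (forall x y, linf (f x y))].

Definition teq2 (s t : seq (H * H)) : Prop :=
  forall (W : lmodType K) (f : H -> H -> W), bilin f ->
    \sum_(p <- s) f p.1 p.2 = \sum_(p <- t) f p.1 p.2.

Definition teq3 (s t : seq (H * H * H)) : Prop :=
  forall (W : lmodType K) (f : H -> H -> H -> W), trilin f ->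
    \sum_(p <- s) f p.1.1 p.1.2 p.2 = \sum_(p <- t) f p.1.1 p.1.2 p.2.

Fixpoint sw (Delta : H -> seq (H * H)) (n : nat) (h : H) : seq (seq H) :=
  if n is n'.+1 then [seq p.1 :: t | p <- Delta h, t <- sw Delta n' p.2]
  else [:: [:: h]].

Definition is_coalgebra (Delta : H -> seq (H * H)) (eps : H -> K) : Prop :=
  [/\ (forall (a : K) (x y : H),
         teq2 (Delta (a *: x + y)) ([seq (a *: p.1, p.2) | p <- Delta x] ++ Delta y)),
      linf eps,
      (forall h, teq3 [seq (q.1, q.2, p.2) | p <- Delta h, q <- Delta p.1]
                      [seq (p.1, q.1, q.2) | p <- Delta h, q <- Delta p.2]),
      (forall h, \sum_(p <- Delta h) eps p.1 *: p.2 = h) &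
      (forall h, \sum_(p <- Delta h) eps p.2 *: p.1 = h)].

Definition is_dual_quasi_bialgebra (Delta : H -> seq (H * H)) (eps : H -> K)
    (m : H -> H -> H) (one : H) (omega omegainv : H -> H -> H -> K) : Prop :=
  [/\ is_coalgebra Delta eps,
      bilin m /\
      (forall h k, teq2 (Delta (m h k))
                        [seq (m p.1 q.1, m p.2 q.2) | p <- Delta h, q <- Delta k]) /\
      (forall h k, eps (m h k) = eps h * eps k),
      (* u : K -> H, u(1) = one, is a coalgebra map *)
      teq2 (Delta one) [:: (one, one)] /\ eps one = 1,
      (forall h, m one h = h /\ m h one = h) &
      [/\ trilinf omega /\ trilinf omegainv,
          (forall h k l,
             \sum_(th <- sw Delta 1 h) \sum_(tk <- sw Delta 1 k) \sum_(tl <- sw Delta 1 l)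
               omega th`_0 tk`_0 tl`_0 * omegainv th`_1 tk`_1 tl`_1
             = eps h * eps k * eps l) /\
          (forall h k l,
             \sum_(th <- sw Delta 1 h) \sum_(tk <- sw Delta 1 k) \sum_(tl <- sw Delta 1 l)
               omegainv th`_0 tk`_0 tl`_0 * omega th`_1 tk`_1 tl`_1
             = eps h * eps k * eps l),
          (forall h k l, (h = one \/ k = one \/ l = one) ->
             omega h k l = eps h * eps k * eps l),
          (forall h k l n,
             \sum_(th <- sw Delta 1 h) \sum_(tk <- sw Delta 1 k)
             \sum_(tl <- sw Delta 1 l) \sum_(tn <- sw Delta 1 n)
               omega th`_0 tk`_0 (m tl`_0 tn`_0) * omega (m th`_1 tk`_1) tl`_1 tn`_1
             = \sum_(th <- sw Delta 1 h) \sum_(tk <- sw Delta 2 k)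
               \sum_(tl <- sw Delta 2 l) \sum_(tn <- sw Delta 1 n)
               omega tk`_0 tl`_0 tn`_0 * omega th`_0 (m tk`_1 tl`_1) tn`_1
                 * omega th`_1 tk`_2 tl`_2) &
          (forall h k l,
             \sum_(th <- sw Delta 1 h) \sum_(tk <- sw Delta 1 k) \sum_(tl <- sw Delta 1 l)
               omega th`_1 tk`_1 tl`_1 *: m th`_0 (m tk`_0 tl`_0)
             = \sum_(th <- sw Delta 1 h) \sum_(tk <- sw Delta 1 k) \sum_(tl <- sw Delta 1 l)
               omega th`_0 tk`_0 tl`_0 *: m (m th`_1 tk`_1) tl`_1)]].

Definition is_dual_quasi_hopf (Delta : H -> seq (H * H)) (eps : H -> K)
    (m : H -> H -> H) (one : H) (omega omegainv : H -> H -> H -> K)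
    (s : H -> H) (alpha beta : H -> K) : Prop :=
  [/\ is_dual_quasi_bialgebra Delta eps m one omega omegainv,
      lin1 s /\ (forall h, teq2 (Delta (s h)) [seq (s p.2, s p.1) | p <- Delta h]) /\
      (forall h, eps (s h) = eps h),
      linf alpha /\ linf beta,
      (forall h, \sum_(t <- sw Delta 2 h) beta t`_1 *: m t`_0 (s t`_2) = beta h *: one) /\
      (forall h, \sum_(t <- sw Delta 2 h) alpha t`_1 *: m (s t`_0) t`_2 = alpha h *: one) &
      (forall h, \sum_(t <- sw Delta 4 h)
                   omega t`_0 ((beta t`_1 * alpha t`_3) *: s t`_2) t`_4 = eps h) /\
      (forall h, \sum_(t <- sw Delta 4 h)
                   omegainv (s t`_0) ((alpha t`_1 * beta t`_3) *: t`_2) (s t`_4) = eps h)].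

Definition is_preantipode (Delta : H -> seq (H * H)) (eps : H -> K)
    (m : H -> H -> H) (one : H) (omega : H -> H -> H -> K) (S : H -> H) : Prop :=
  [/\ lin1 S,
      (forall x, teq2 [seq (q.1, m p.1 q.2) | p <- Delta x, q <- Delta (S p.2)]
                      [:: (S x, one)]),
      (forall x, \sum_(t <- sw Delta 2 x) omega t`_0 (S t`_1) t`_2 = eps x) &
      (forall x, teq2 [seq (m q.1 p.2, q.2) | p <- Delta x, q <- Delta (S p.1)]
                      [:: (one, S x)])].

Definition conv_S (Delta : H -> seq (H * H)) (s : H -> H) (alpha beta : H -> K)
    (h : H) : H :=
  \sum_(t <- sw Delta 2 h) (beta t`_0 * alpha t`_2) *: s t`_1.

End DQH.

From HB Require Import structures.
From mathcomp Require Import all_boot all_order all_algebra zify.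
Set Implicit Arguments. Unset Strict Implicit. Unset Printing Implicit Defensive.
Import GRing.Theory.
Local Open Scope ring_scope.

(* Since s reverses the coproduct, the coproduct of S(x) = beta(x_1) s(x_2) alpha(x_3)
   is beta(x_1) alpha(x_4) s(x_3) (x) s(x_2).  Inserting this into the two tensor
   axioms and regrouping Sweedler legs by coassociativity, three consecutive legs
   combine into x_1 beta(x_2) s(x_3) = beta(x) 1 (first axiom), resp.
   s(x_1) alpha(x_2) x_3 = alpha(x) 1 (third axiom).  Expanding S(x_2) inside
   omega(x_1, S(x_2), x_3) gives exactly the normalisation of omega on beta s alpha. *)

Section Linearity.
Variables (K : fieldType) (H V W : lmodType K).

Lemma lin1_0 (f : H -> W) : lin1 f -> f 0 = 0.
Proof.
move=> Lf; apply: (addrI (f 0)); rewrite addr0.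
by rewrite -{1}(scale1r (f 0)) -Lf scale1r addr0.
Qed.

Lemma lin1_add (f : H -> W) : lin1 f -> forall x y, f (x + y) = f x + f y.
Proof. by move=> Lf x y; rewrite -{1}[x]scale1r Lf scale1r. Qed.

Lemma lin1_scale (f : H -> W) : lin1 f -> forall a x, f (a *: x) = a *: f x.
Proof. by move=> Lf a x; rewrite -[a *: x]addr0 Lf lin1_0 // addr0. Qed.

Lemma lin1_sum (f : H -> W) (I : Type) (r : seq I) (g : I -> H) :
  lin1 f -> f (\sum_(i <- r) g i) = \sum_(i <- r) f (g i).
Proof.
move=> Lf; elim: r => [|a r IH]; first by rewrite !big_nil lin1_0.
by rewrite !big_cons lin1_add // IH.
Qed.

Lemma lin1_sum_scale (f : H -> W) (I : Type) (r : seq I) (c : I -> K) (v : I -> H) :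
  lin1 f -> f (\sum_(i <- r) c i *: v i) = \sum_(i <- r) c i *: f (v i).
Proof. by move=> Lf; rewrite lin1_sum //; apply: eq_bigr => i _; rewrite lin1_scale. Qed.

Lemma lin1_big (I : eqType) (r : seq I) (g : I -> H -> W) :
  (forall i, i \in r -> lin1 (g i)) -> lin1 (fun x => \sum_(i <- r) g i x).
Proof.
move=> Lg a x y; rewrite scaler_sumr -big_split /= big_seq [RHS]big_seq.
by apply: eq_bigr => i ri; rewrite Lg.
Qed.

Lemma lin1_comp (f : V -> W) (g : H -> V) : lin1 f -> lin1 g -> lin1 (fun x => f (g x)).
Proof. by move=> Lf Lg a x y; rewrite Lg Lf. Qed.

Lemma lin1_scaler (c : K) (g : H -> W) : lin1 g -> lin1 (fun x => c *: g x).
Proof. by move=> Lg a x y; rewrite Lg scalerDr !scalerA mulrC. Qed.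

Lemma lin1_scalel (c : H -> K) (w : W) : linf c -> lin1 (fun x => c x *: w).
Proof. by move=> Lc a x y; rewrite Lc scalerDl scalerA. Qed.

Lemma linf_mulr (c : H -> K) (k : K) : linf c -> linf (fun x => c x * k).
Proof. by move=> Lc a x y; rewrite Lc mulrDl mulrA. Qed.

Lemma linf_mull (c : H -> K) (k : K) : linf c -> linf (fun x => k * c x).
Proof. by move=> Lc a x y; rewrite Lc mulrDr mulrCA. Qed.

End Linearity.

Lemma bilin_comp_mull (K : fieldType) (H W : lmodType K) (f : H -> H -> W) (m : H -> H -> H) (a : H) :
  bilin f -> bilin m -> bilin (fun x y => f x (m a y)).
Proof. by move=> Bf Bm; split=> [y|x]; [exact: Bf.1 | exact: lin1_comp (Bf.2 x) (Bm.2 a)]. Qed.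

Lemma bilin_comp_mulr (K : fieldType) (H W : lmodType K) (f : H -> H -> W) (m : H -> H -> H) (a : H) :
  bilin f -> bilin m -> bilin (fun x y => f (m x a) y).
Proof. by move=> Bf Bm; split=> [y|x]; [exact: lin1_comp (Bf.1 y) (Bm.1 a) | exact: Bf.2]. Qed.

Section Sweedler.
Variables (K : fieldType) (H : lmodType K) (Delta : H -> seq (H * H)).

Definition delta_linear : Prop :=
  forall (W : lmodType K) (f : H -> H -> W), bilin f ->
    lin1 (fun h => \sum_(p <- Delta h) f p.1 p.2).

Definition coassociative : Prop :=
  forall (W : lmodType K) (g : H -> H -> H -> W), trilin g -> forall h,
    \sum_(p <- Delta h) \sum_(q <- Delta p.1) g q.1 q.2 p.2 =
    \sum_(p <- Delta h) \sum_(q <- Delta p.2) g p.1 q.1 q.2.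

(* [F] is linear in each entry of lists of size [n.+1]. *)
Definition multilin (W : lmodType K) (n : nat) (F : seq H -> W) : Prop :=
  forall l r, (size l + size r = n)%N -> lin1 (fun x => F (l ++ x :: r)).

Lemma multilin_cons (W : lmodType K) n (F : seq H -> W) a :
  multilin n.+1 F -> multilin n (fun t => F (a :: t)).
Proof. by move=> MF l r Hs; apply: (MF (a :: l) r); rewrite /= addSn Hs. Qed.

Lemma sw_cons (W : lmodType K) n h (F : seq H -> W) :
  \sum_(t <- sw Delta n.+1 h) F t =
  \sum_(p <- Delta h) \sum_(t <- sw Delta n p.2) F (p.1 :: t).
Proof. by rewrite /= big_allpairs_dep. Qed.

Lemma sw1_sum (W : lmodType K) h (F : seq H -> W) :
  \sum_(t <- sw Delta 1 h) F t = \sum_(p <- Delta h) F [:: p.1; p.2].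
Proof. by rewrite sw_cons; apply: eq_bigr => p _; rewrite big_seq1. Qed.

Lemma sw_size n h t : t \in sw Delta n h -> size t = n.+1.
Proof.
elim: n h t => [|n IH] h t /=; first by rewrite mem_seq1 => /eqP ->.
by case/allpairsPdep => p [u [_ Hu ->]] /=; rewrite (IH _ _ Hu).
Qed.

(* Exposes the legs of a Sweedler tuple, so that [t`_i] computes on the result. *)
Lemma sw_legs n h t : t \in sw Delta n h -> t = [seq t`_i | i <- iota 0 n.+1].
Proof. by move/sw_size=> Ht; rewrite -{1}(mkseq_nth 0 t) /mkseq Ht. Qed.

Hypothesis Delta_lin : delta_linear.

Lemma sw_lin (W : lmodType K) n (F : seq H -> W) :
  multilin n F -> lin1 (fun h => \sum_(t <- sw Delta n h) F t).
Proof.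
elim: n F => [|n IH] F MF.
  by move=> a x y /=; rewrite !big_seq1; exact: (MF [::] [::]).
have BF : bilin (fun a b => \sum_(t <- sw Delta n b) F (a :: t)).
  split=> [b|a]; last by apply: IH; exact: multilin_cons.
  by apply: lin1_big => t Ht; apply: (MF [::] t); rewrite (sw_size Ht).
by move=> a x y; rewrite !sw_cons; exact: (Delta_lin BF a x y).
Qed.

Hypothesis Delta_coassoc : coassociative.

Lemma sw_cat (W : lmodType K) k n h (F : seq H -> W) :
  multilin (k + n).+1 F ->
  \sum_(p <- Delta h) \sum_(u <- sw Delta k p.1) \sum_(t <- sw Delta n p.2) F (u ++ t)
  = \sum_(t <- sw Delta (k + n).+1 h) F t.
Proof.
elim: k n h F => [|k IH] n h F MF.
  by rewrite add0n sw_cons; apply: eq_bigr => p _ /=; rewrite big_seq1.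
pose g a b c := \sum_(u <- sw Delta k b) \sum_(t <- sw Delta n c) F (a :: u ++ t).
have Tg : trilin g.
  split=> [b c|a c|a b].
  - apply: lin1_big => u Hu; apply: lin1_big => t Ht.
    apply: (MF [::] (u ++ t)); rewrite /= size_cat (sw_size Hu) (sw_size Ht); lia.
  - apply: sw_lin => l r Hs; apply: lin1_big => t Ht c0 x y.
    have Hs' : (size (a :: l) + size (r ++ t) = (k.+1 + n).+1)%N.
      by rewrite /= size_cat (sw_size Ht); lia.
    by have := MF _ _ Hs' c0 x y; rewrite /= -!catA.
  - apply: lin1_big => u Hu; apply: sw_lin => l r Hs c0 x y.
    have Hs' : (size (a :: u ++ l) + size r = (k.+1 + n).+1)%N.
      by rewrite /= size_cat (sw_size Hu); lia.
    by have := MF _ _ Hs' c0 x y; rewrite /= -!catA.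
transitivity (\sum_(p <- Delta h) \sum_(q <- Delta p.1) g q.1 q.2 p.2).
  apply: eq_bigr => p _; rewrite sw_cons; apply: eq_bigr => q _ /=.
  by rewrite /g exchange_big.
rewrite Delta_coassoc // addSn sw_cons; apply: eq_bigr => p _.
by rewrite -IH //; exact: multilin_cons.
Qed.

Lemma sw_split (W : lmodType K) n k h i (F : seq H -> W) :
  (i <= n)%N -> multilin (n + k) F ->
  \sum_(t <- sw Delta n h) \sum_(u <- sw Delta k t`_i) F (take i t ++ u ++ drop i.+1 t)
  = \sum_(t <- sw Delta (n + k) h) F t.
Proof.
elim: n k h i F => [|n IH] k h i F Hi MF.
  move: Hi; rewrite leqn0 => /eqP ->; rewrite big_seq1 add0n.
  by apply: eq_bigr => u _; rewrite /= cats0.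
rewrite sw_cons; case: i Hi => [|j] Hj.
  transitivity (\sum_(p <- Delta h) \sum_(u <- sw Delta k p.1)
                  \sum_(t <- sw Delta n p.2) F (u ++ t)).
    apply: eq_bigr => p _ /=; rewrite exchange_big /=; apply: eq_bigr => u _.
    by apply: eq_bigr => t _; rewrite drop0.
  by rewrite sw_cat addnC // -addSn.
rewrite addSn sw_cons; apply: eq_bigr => p _ /=.
by rewrite -(IH k p.2 j (fun t => F (p.1 :: t))) //; apply: multilin_cons; rewrite -addSn.
Qed.

End Sweedler.

Lemma coalgebra_delta_linear (K : fieldType) (H : lmodType K) (Delta : H -> seq (H * H)) eps :
  is_coalgebra Delta eps -> delta_linear Delta.
Proof.
case=> DeltaD _ _ _ _ W f Bf a x y.
rewrite (DeltaD a x y W f Bf) big_cat big_map /= scaler_sumr; congr (_ + _).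
by apply: eq_bigr => p _; rewrite (lin1_scale (Bf.1 p.2)).
Qed.

Lemma coalgebra_coassociative (K : fieldType) (H : lmodType K) (Delta : H -> seq (H * H)) eps :
  is_coalgebra Delta eps -> coassociative Delta.
Proof. by case=> _ _ Dcoassoc _ _ W g Tg h; have := Dcoassoc h W g Tg; rewrite !big_allpairs_dep. Qed.

(* Reduces [multilin n F] to one goal per position of the variable entry (n <= 4). *)
Ltac multilin_slots :=
  move=> [|? [|? [|? [|? [|? ?]]]]] [|? [|? [|? [|? [|? ?]]]]] /= ?; try lia.

Section ConvS.
Variables (K : fieldType) (H : lmodType K) (Delta : H -> seq (H * H)) (eps : H -> K).
Variables (m : H -> H -> H) (one : H) (omega : H -> H -> H -> K).
Variables (s : H -> H) (alpha beta : H -> K).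
Hypotheses (Delta_lin : delta_linear Delta) (Delta_coassoc : coassociative Delta).
Hypotheses (m_bilin : bilin m) (s_lin : lin1 s) (alpha_lin : linf alpha) (beta_lin : linf beta).
Hypothesis s_antico :
  forall h, teq2 (Delta (s h)) [seq (s p.2, s p.1) | p <- Delta h].

Local Notation S := (conv_S Delta s alpha beta).

Lemma conv_S_lin : lin1 S.
Proof.
apply: (sw_lin Delta_lin (n := 2) (F := fun t => (beta t`_0 * alpha t`_2) *: s t`_1)).
multilin_slots.
- by apply: lin1_scalel; apply: linf_mulr.
- exact: lin1_scaler.
- by apply: lin1_scalel; apply: linf_mull.
Qed.

Lemma conv_S_coproduct (W : lmodType K) (g : H -> H -> W) x :
  bilin g ->
  \sum_(q <- Delta (S x)) g q.1 q.2
  = \sum_(t <- sw Delta 3 x) (beta t`_0 * alpha t`_3) *: g (s t`_2) (s t`_1).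
Proof.
move=> Bg; rewrite (lin1_sum_scale _ _ _ (Delta_lin Bg)).
pose F (t : seq H) := (beta t`_0 * alpha t`_3) *: g (s t`_2) (s t`_1).
rewrite -[RHS](@sw_split _ _ _ Delta_lin Delta_coassoc _ 2 1 x 1 F) //; last first.
  rewrite /F; multilin_slots.
  - by apply: lin1_scalel; apply: linf_mulr.
  - by apply: lin1_scaler; exact: lin1_comp (Bg.2 _) s_lin.
  - by apply: lin1_scaler; exact: lin1_comp (Bg.1 _) s_lin.
  - by apply: lin1_scalel; apply: linf_mull.
rewrite big_seq [RHS]big_seq; apply: eq_bigr => t Ht.
rewrite (sw_legs Ht) /= sw1_sum (s_antico _ Bg) big_map scaler_sumr.
by apply: eq_bigr => q _; rewrite /F.
Qed.

Hypothesis beta_s :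
  forall h, \sum_(t <- sw Delta 2 h) beta t`_1 *: m t`_0 (s t`_2) = beta h *: one.

Lemma conv_S_right x :
  teq2 [seq (q.1, m p.1 q.2) | p <- Delta x, q <- Delta (S p.2)] [:: (S x, one)].
Proof.
move=> W f Bf; rewrite big_allpairs_dep big_seq1 /=.
pose G (w : seq H) := (beta w`_1 * alpha w`_4) *: f (s w`_3) (m w`_0 (s w`_2)).
have MG : multilin 4 G.
  rewrite /G; multilin_slots.
  - by apply: lin1_scaler; exact: lin1_comp (Bf.2 _) (m_bilin.1 _).
  - by apply: lin1_scalel; apply: linf_mulr.
  - by apply: lin1_scaler; exact: lin1_comp (Bf.2 _) (lin1_comp (m_bilin.2 _) s_lin).
  - by apply: lin1_scaler; exact: lin1_comp (Bf.1 _) s_lin.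
  - by apply: lin1_scalel; apply: linf_mull.
transitivity (\sum_(t <- sw Delta 4 x) G t).
  rewrite sw_cons; apply: eq_bigr => p _.
  by rewrite (conv_S_coproduct _ (bilin_comp_mull p.1 Bf m_bilin)).
rewrite -(@sw_split _ _ _ Delta_lin Delta_coassoc _ 2 2 x 0 G) //.
rewrite /conv_S (lin1_sum_scale _ _ _ (Bf.1 _)) big_seq [RHS]big_seq.
apply: eq_bigr => t Ht; rewrite (sw_legs Ht) /= mulrC -scalerA -(lin1_scale (Bf.2 _)).
rewrite -beta_s (lin1_sum_scale _ _ _ (Bf.2 _)) scaler_sumr big_seq [RHS]big_seq.
by apply: eq_bigr => u Hu; rewrite (@sw_legs _ _ Delta 2 t`_0 u Hu) /G /= scalerA mulrC.
Qed.

Hypothesis alpha_s :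
  forall h, \sum_(t <- sw Delta 2 h) alpha t`_1 *: m (s t`_0) t`_2 = alpha h *: one.

Lemma conv_S_left x :
  teq2 [seq (m q.1 p.2, q.2) | p <- Delta x, q <- Delta (S p.1)] [:: (one, S x)].
Proof.
move=> W f Bf; rewrite big_allpairs_dep big_seq1 /=.
pose G (w : seq H) := (beta w`_0 * alpha w`_3) *: f (m (s w`_2) w`_4) (s w`_1).
have MG : multilin 4 G.
  rewrite /G; multilin_slots.
  - by apply: lin1_scalel; apply: linf_mulr.
  - by apply: lin1_scaler; exact: lin1_comp (Bf.2 _) s_lin.
  - by apply: lin1_scaler; exact: lin1_comp (Bf.1 _) (lin1_comp (m_bilin.1 _) s_lin).
  - by apply: lin1_scalel; apply: linf_mull.
  - by apply: lin1_scaler; exact: lin1_comp (Bf.1 _) (m_bilin.2 _).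
transitivity (\sum_(t <- sw Delta 4 x) G t).
  rewrite -(@sw_split _ _ _ Delta_lin Delta_coassoc _ 1 3 x 0 G) // sw1_sum.
  apply: eq_bigr => p _; rewrite (conv_S_coproduct _ (bilin_comp_mulr p.2 Bf m_bilin)).
  by rewrite big_seq [RHS]big_seq; apply: eq_bigr => u Hu; rewrite (sw_legs Hu).
rewrite -(@sw_split _ _ _ Delta_lin Delta_coassoc _ 2 2 x 2 G) //.
rewrite /conv_S (lin1_sum_scale _ _ _ (Bf.2 _)) big_seq [RHS]big_seq.
apply: eq_bigr => t Ht; rewrite (sw_legs Ht) /= -scalerA -(lin1_scale (Bf.1 _)).
rewrite -alpha_s (lin1_sum_scale _ _ _ (Bf.1 _)) scaler_sumr big_seq [RHS]big_seq.
by apply: eq_bigr => u Hu; rewrite (@sw_legs _ _ Delta 2 t`_2 u Hu) /G /= scalerA.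
Qed.

Hypothesis omega_trilin : trilinf omega.
Hypothesis omega_beta_s_alpha :
  forall h, \sum_(t <- sw Delta 4 h) omega t`_0 ((beta t`_1 * alpha t`_3) *: s t`_2) t`_4
            = eps h.

Lemma conv_S_omega x : \sum_(t <- sw Delta 2 x) omega t`_0 (S t`_1) t`_2 = eps x.
Proof.
case: omega_trilin => omega_lin1 omega_lin2 omega_lin3.
pose F (t : seq H) : K^o := omega t`_0 ((beta t`_1 * alpha t`_3) *: s t`_2) t`_4.
rewrite -omega_beta_s_alpha -(@sw_split _ _ _ Delta_lin Delta_coassoc _ 2 2 x 1 F) //.
  rewrite big_seq [RHS]big_seq; apply: eq_bigr => t Ht; rewrite (sw_legs Ht) /= /conv_S.
  have omega_mid : lin1 ((omega t`_0)^~ t`_2 : H -> K^o) := omega_lin2 t`_0 t`_2.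
  rewrite (lin1_sum _ _ omega_mid) big_seq [RHS]big_seq.
  by apply: eq_bigr => u Hu; rewrite (sw_legs Hu).
rewrite /F; multilin_slots.
- exact: omega_lin1.
- apply: (lin1_comp (f := (fun y => omega _ y _) : H -> K^o)); first exact: omega_lin2.
  by apply: lin1_scalel; apply: linf_mulr.
- apply: (lin1_comp (f := (fun y => omega _ y _) : H -> K^o)); first exact: omega_lin2.
  exact: lin1_scaler.
- apply: (lin1_comp (f := (fun y => omega _ y _) : H -> K^o)); first exact: omega_lin2.
  by apply: lin1_scalel; apply: linf_mull.
- exact: omega_lin3.
Qed.

End ConvS.

Theorem theorem3p10 (K : fieldType) (H : lmodType K)
    (Delta : H -> seq (H * H)) (eps : H -> K) (m : H -> H -> H) (one : H)
    (omega omegainv : H -> H -> H -> K) (s : H -> H) (alpha beta : H -> K) :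
  is_dual_quasi_hopf Delta eps m one omega omegainv s alpha beta ->
  is_preantipode Delta eps m one omega (conv_S Delta s alpha beta).
Proof.
case=> [[Hco [m_bilin _] _ _ [[omega_trilin _] _ _ _ _]]
        [s_lin [s_antico _]] [alpha_lin beta_lin] [beta_s alpha_s] [omega_bsa _]].
have Delta_lin := coalgebra_delta_linear Hco.
have Delta_coassoc := coalgebra_coassociative Hco.
split.
- exact: conv_S_lin.
- exact: conv_S_right.
- exact: conv_S_omega.
- exact: conv_S_left.
Qed.
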